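(* Let $\kappa$ be a regular cardinal and let $A,B$ be meet-semilattices with $A\subseteq B\subseteq \mathcal{BL} A$, where $A$ is identified with $\{{\downarrow}a:a\in A\}$, $A$ is a sub-meet-semilattice of $B$ and $B$ is a sub-meet-semilattice of $\mathcal{BL} A$. The following are equivalent: (1) $B$ is a $\kappa$-frame; (2) $B$ is a sub-$\kappa$-frame of $\mathcal{BL} A$ (i.e., closed under finite meets and under joins of fewer than $\kappa$ elements computed in $\mathcal{BL} A$); (3) the sub-$\kappa$-frame of $\mathcal{BL} A$ generated by $B$ equals $B$.
   Context: A meet-semilattice is a poset with all finite meets. For $S\subseteq A$ with $\bigvee S$ existing in $A$, the join is distributive if $a\wedge\bigvee S=\bigvee\{a\wedge s:s\in S\}$ for all $a\in A$. A D-ideal is a downset $E$ with $\bigvee S\in E$ whenever $S\subseteq E$ has a distributive join; $\mathcal{BL} A$ is the frame of D-ideals of $A$ ordered by inclusion, into which $A$ embeds via $a\mapsto{\downarrow}a$. For a regular cardinal $\kappa$, a $\kappa$-set is a set of cardinality $<\kappa$ and a $\kappa$-join is a join of a $\kappa$-set. A meet-semilattice is $\kappa$-complete if all $\kappa$-joins exist, $\kappa$JD if every existing $\kappa$-join is distributive, and a $\kappa$-frame if it is both $\kappa$-complete and $\kappa$JD. *)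

From mathcomp Require Import all_boot all_order.
Import Order.Theory.
Set Implicit Arguments.
Unset Strict Implicit.

(* cardinal kappa represented by a type K: S is a kappa-set iff |S| < |K|,
   i.e. there is no injection of K into S *)
Definition small {X : Type} (K : Type) (S : X -> Prop) : Prop :=
  ~ exists f : K -> X, injective f /\ forall k, S (f k).

Section Generic.
Variables (X : Type) (P : X -> Prop) (le : X -> X -> Prop).

Definition is_join (S : X -> Prop) (j : X) : Prop :=
  P j /\ (forall s, S s -> le s j) /\
  (forall y, P y -> (forall s, S s -> le s y) -> le j y).

Definition is_meet (S : X -> Prop) (m : X) : Prop :=
  P m /\ (forall s, S s -> le m s) /\
  (forall y, P y -> (forall s, S s -> le y s) -> le y m).

Definition pair2 (a b : X) : X -> Prop := fun x => x = a \/ x = b.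

Definition distributive_join (S : X -> Prop) (j : X) : Prop :=
  is_join S j /\
  forall a m, P a -> is_meet (pair2 a j) m ->
    is_join (fun t => exists s, S s /\ is_meet (pair2 a s) t) m.

Definition kappa_complete (K : Type) : Prop :=
  forall S, (forall s, S s -> P s) -> small K S -> exists j, is_join S j.

Definition kappa_JD (K : Type) : Prop :=
  forall S j, (forall s, S s -> P s) -> small K S -> is_join S j ->
    distributive_join S j.

Definition kappa_frame (K : Type) : Prop := kappa_complete K /\ kappa_JD K.

End Generic.

(* K represents an infinite regular cardinal: a union of fewer than kappa
   sets, each of size < kappa, has size < kappa. *)
Definition regular_cardinal (K : Type) : Prop :=
  (exists f : nat -> K, injective f) /\
  forall (I T : Type) (J : I -> Prop) (F : I -> T -> Prop),
    small K J -> (forall i, J i -> small K (F i)) ->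
    small K (fun t => exists i, J i /\ F i t).

Section Ideals.
Variables (d : Order.disp_t) (A : tMeetSemilatticeType d).

Definition leA : A -> A -> Prop := fun x y => (x <= y)%O.
Definition allA : A -> Prop := fun _ => True.

Definition down (a : A) : A -> Prop := fun x => (x <= a)%O.

Definition D_ideal (E : A -> Prop) : Prop :=
  (forall x y, (y <= x)%O -> E x -> E y) /\
  (forall S j, (forall s, S s -> E s) -> distributive_join allA leA S j -> E j).

Definition incl (E F : A -> Prop) : Prop := forall x, E x -> F x.

Definition meet_closed (Q : (A -> Prop) -> Prop) : Prop :=
  Q (fun _ => True) /\ (forall E F, Q E -> Q F -> Q (fun x => E x /\ F x)).

Definition sub_kappa_frame (K : Type) (Q : (A -> Prop) -> Prop) : Prop :=
  (forall E, Q E -> D_ideal E) /\ meet_closed Q /\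
  (forall S j, (forall E, S E -> Q E) -> small K S ->
     is_join D_ideal incl S j -> Q j).

Definition generated_sub_kappa_frame (K : Type) (B : (A -> Prop) -> Prop)
  : (A -> Prop) -> Prop :=
  fun E => forall Q, sub_kappa_frame K Q -> (forall F, B F -> Q F) -> Q E.

End Ideals.

(* If j is the join of S in B and that join is distributive, then meeting it
   with the principal ideal of any y in j shows that y is the distributive join
   in A of the elements below y lying in some member of S.  Hence j is contained
   in every D-ideal containing S: distributive joins of B are joins of BL A.
   Conversely BL A is a frame, so a B closed under the kappa-joins of BL A
   inherits their distributivity.  Condition (3) is equivalent to (2) formally,
   the generated sub-kappa-frame being the intersection of all sub-kappa-frames
   containing B. *)

From mathcomp Require Import all_boot all_order.
From Stdlib Require Import FunctionalExtensionality PropExtensionality.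
Import Order.Theory.
(* Imported after Order.Theory so that [meet_closed] is the notion of Defs. *)
From Pilot Require Import Defs.

Set Implicit Arguments.
Unset Strict Implicit.
Local Open Scope order_scope.

Lemma pred_ext (T : Type) (E F : T -> Prop) : (forall x, E x <-> F x) -> E = F.
Proof.
by move=> EF; apply: functional_extensionality => x; apply: propositional_extensionality.
Qed.

Section JoinsAndMeets.
Variables (X : Type) (P : X -> Prop) (le : X -> X -> Prop).

Lemma eq_is_join (S S' : X -> Prop) j :
  (forall x, S x <-> S' x) -> is_join P le S j -> is_join P le S' j.
Proof.
move=> SS' [Pj [ub lub]]; split=> //; split=> [s /SS'|y Py ubS]; first exact: ub.
by apply: lub => // s /SS'; apply: ubS.
Qed.

Lemma is_join_sub (Q : X -> Prop) S j :
  (forall x, Q x -> P x) -> Q j -> is_join P le S j -> is_join Q le S j.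
Proof. by move=> QP Qj [_ [ub lub]]; split=> //; split=> // y /QP; apply: lub. Qed.

Hypothesis le_anti : forall x y, le x y -> le y x -> x = y.

Lemma is_join_unique S j j' : is_join P le S j -> is_join P le S j' -> j = j'.
Proof.
by move=> [Pj [ub lub]] [Pj' [ub' lub']]; apply: le_anti; [apply: lub | apply: lub'].
Qed.

Lemma is_meet_unique S m m' : is_meet P le S m -> is_meet P le S m' -> m = m'.
Proof.
by move=> [Pm [lb glb]] [Pm' [lb' glb']]; apply: le_anti; [apply: glb' | apply: glb].
Qed.

End JoinsAndMeets.

Section DIdeals.
Variables (d : Order.disp_t) (A : tMeetSemilatticeType d).
Implicit Types (E F : A -> Prop) (S : (A -> Prop) -> Prop).
Local Notation allA := (@allA d A).
Local Notation leA := (@leA d A).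
Local Notation incl := (@incl d A).
Local Notation D_ideal := (@D_ideal d A).

Lemma incl_anti E F : incl E F -> incl F E -> E = F.
Proof. by move=> EF FE; apply: pred_ext => x; split; [apply: EF | apply: FE]. Qed.
Arguments incl_anti : clear implicits.

Lemma is_meet_incl (Q : (A -> Prop) -> Prop) E F :
  Q E -> incl E F -> is_meet Q incl (pair2 E F) E.
Proof. by move=> QE EF; split=> //; split=> [_ [->|->] // | G _ lbG]; apply: lbG; left. Qed.

Lemma is_meet_setI (Q : (A -> Prop) -> Prop) E F :
  Q (fun x => E x /\ F x) -> is_meet Q incl (pair2 E F) (fun x => E x /\ F x).
Proof.
move=> QEF; split=> //; split=> [_ [->|->] x [] // | G _ lbG x Gx].
by split; [apply: (lbG E) | apply: (lbG F)]; rewrite /pair2; auto.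
Qed.

Lemma is_meetP (u v m : A) : is_meet allA leA (pair2 u v) m <-> m = u `&` v.
Proof.
split=> [[_ [lb glb]] | ->].
  apply/le_anti/andP; split.
    by rewrite lexI (lb u (or_introl erefl)) (lb v (or_intror erefl)).
  by apply: glb => // s [->|->]; rewrite /leA ?leIl ?leIr.
split=> //; split=> [s [->|->]|y _ lby]; rewrite /leA ?leIl ?leIr //.
by rewrite lexI (lby u (or_introl erefl)) (lby v (or_intror erefl)).
Qed.

Lemma distributive_joinP (T : A -> Prop) j :
  distributive_join allA leA T j <->
  is_join allA leA T j /\
  forall a, is_join allA leA (fun t => exists2 s, T s & t = a `&` s) (a `&` j).
Proof.
have meets a t : (exists s, T s /\ is_meet allA leA (pair2 a s) t) <->
                 exists2 s, T s & t = a `&` s.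
  by split=> [[s [Ts /is_meetP]] | [s Ts /is_meetP]]; exists s.
split=> [[Jj dist] | [Jj dist]]; split=> // a.
  exact: eq_is_join (meets a) (dist a _ I (proj2 (is_meetP _ _ _) erefl)).
move=> m _ /is_meetP ->.
by apply: eq_is_join (dist a) => t; rewrite meets.
Qed.

Lemma D_ideal_le E (x y : A) : D_ideal E -> y <= x -> E x -> E y.
Proof. by case=> + _; apply. Qed.

Lemma D_ideal_bigcap (I : Type) (P : I -> Prop) (F : I -> A -> Prop) :
  (forall i, P i -> D_ideal (F i)) -> D_ideal (fun x => forall i, P i -> F i x).
Proof.
move=> DF; split=> [x y yx Fx i Pi | T j TF Jj i Pi].
  exact: D_ideal_le (DF i Pi) yx (Fx i Pi).
by case: (DF i Pi) => _ join_closed; apply: (join_closed T) => // s /TF; apply.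
Qed.

Lemma D_ideal_setT : D_ideal (fun _ : A => True).
Proof. by []. Qed.

Lemma D_ideal_setI E F : D_ideal E -> D_ideal F -> D_ideal (fun x => E x /\ F x).
Proof.
move=> DE DF; split=> [x y yx [Ex Fx] | T j TEF Jj]; split.
- exact: D_ideal_le DE yx Ex.
- exact: D_ideal_le DF yx Fx.
- by case: DE => _ join_closed; apply: (join_closed T) => // s /TEF [].
- by case: DF => _ join_closed; apply: (join_closed T) => // s /TEF [].
Qed.

Lemma D_ideal_preimage_meet E b : D_ideal E -> D_ideal (fun x => E (x `&` b)).
Proof.
move=> DE; split=> [x y yx | T j TE /distributive_joinP [_ dist]].
  by apply: D_ideal_le DE _; apply: leI2.
case: DE => _ join_closed; rewrite meetC.
apply: (join_closed (fun t => exists2 s, T s & t = b `&` s)).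
  by move=> _ [s Ts ->]; rewrite meetC; apply: TE.
apply/distributive_joinP; split=> // a; rewrite meetA.
apply: eq_is_join (dist (a `&` b)) => t; split.
  by case=> s Ts ->; exists (b `&` s); [exists s | rewrite meetA].
by case=> _ [s Ts ->] ->; exists s; rewrite ?meetA.
Qed.

Definition bljoin S : A -> Prop :=
  fun x => forall E, D_ideal E /\ (forall s, S s -> incl s E) -> E x.

Lemma is_join_bljoin S : is_join D_ideal incl S (bljoin S).
Proof.
split; first by apply: D_ideal_bigcap => E [].
split=> [s Ss x sx E [_ SE] | E DE SE x]; first exact: SE Ss x sx.
by apply; split.
Qed.

Lemma is_join_bljoin_setI S a : (forall s, S s -> D_ideal s) -> D_ideal a ->
  is_join D_ideal incl (fun t => exists2 s, S s & t = (fun x => a x /\ s x))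
    (fun x => a x /\ bljoin S x).
Proof.
move=> DS Da; have [Dj [ubj lubj]] := is_join_bljoin S.
split; first exact: D_ideal_setI.
split=> [_ [s Ss ->] x [ax sx] | y Dy ubS x [ax jx]]; first by split=> //; apply: ubj sx.
have DE : D_ideal (fun x => forall b, a b -> y (x `&` b)).
  by apply: D_ideal_bigcap => b _; apply: D_ideal_preimage_meet.
have jE : incl (bljoin S) (fun x => forall b, a b -> y (x `&` b)).
  apply: lubj => // s Ss z sz b ab.
  apply: (ubS (fun x => a x /\ s x)); first by exists s.
  by split; [apply: D_ideal_le Da _ ab | apply: D_ideal_le (DS s Ss) _ sz];
    rewrite ?leIl ?leIr.
by rewrite -[x]meetxx; apply: jE.
Qed.

Lemma sub_kappa_frame_D_ideal K : sub_kappa_frame K D_ideal.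
Proof.
split=> //; split; last by move=> S j _ _ [].
by split=> [|E F]; [exact: D_ideal_setT | exact: D_ideal_setI].
Qed.

Lemma sub_kappa_frame_generated K (B : (A -> Prop) -> Prop) : (forall E, B E -> D_ideal E) ->
  sub_kappa_frame K (generated_sub_kappa_frame K B).
Proof.
move=> BD; split=> [E genE | ]; first exact: genE _ (sub_kappa_frame_D_ideal K) BD.
split; first split.
- by move=> Q [_ [[QT _] _]].
- move=> E F genE genF Q sQ BQ; have [_ [[_ QI] _]] := sQ.
  by apply: QI; [apply: genE | apply: genF].
- move=> S j Sgen smallS Jj Q sQ BQ; have [_ [_ Qjoin]] := sQ.
  by apply: (Qjoin S) => // E /Sgen; apply.
Qed.

Lemma generated_sub_kappa_frame_id K (B : (A -> Prop) -> Prop) :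
  sub_kappa_frame K B -> generated_sub_kappa_frame K B = B.
Proof.
by move=> sB; apply: pred_ext => E; split=> [genE | BE Q _ BQ]; [apply: genE | apply: BQ].
Qed.

Section Embedding.
Variable B : (A -> Prop) -> Prop.
Hypotheses (downB : forall a : A, B (down a)) (BD : forall E, B E -> D_ideal E).

Definition below_in S (y : A) : A -> Prop := fun v => v <= y /\ exists2 s, S s & s v.

Section DistributiveJoin.
Variables (S : (A -> Prop) -> Prop) (j : A -> Prop).
Hypotheses (SB : forall s, S s -> B s) (distj : distributive_join B incl S j).

Lemma is_join_below_in y : j y -> is_join allA leA (below_in S y) y.
Proof.
case: distj => [[Bj _] dist] jy.
have yj : incl (down y) j by move=> x xy; apply: D_ideal_le (BD Bj) xy jy.
have [_ [_ lub]] := dist (down y) (down y) (downB y) (is_meet_incl (downB y) yj).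
split=> //; split=> [v [] // | z _ ubz].
suff: incl (down y) (down z) by apply; rewrite /down.
apply: lub (downB z) _ => t [s [Ss [_ [lbt _]]]] x tx; apply: ubz; split.
  exact: lbt _ (or_introl erefl) x tx.
by exists s => //; apply: lbt _ (or_intror erefl) x tx.
Qed.

Lemma distributive_join_below_in y : j y -> distributive_join allA leA (below_in S y) y.
Proof.
move=> jy; apply/distributive_joinP; split=> [|a]; first exact: is_join_below_in.
have [[Bj _] _] := distj.
have jay : j (a `&` y) by apply: D_ideal_le (BD Bj) (leIr y a) jy.
apply: eq_is_join (is_join_below_in jay) => t; split.
  case=> ta [s Ss st]; exists t.
    by split; [apply: le_trans ta (leIr y a) | exists s].
  by apply/esym/meet_idPr; apply: le_trans ta (leIl a y).
case=> u [uy [s Ss su]] ->; split; first exact: leI2.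
by exists s => //; apply: D_ideal_le (BD (SB Ss)) (leIr _ a) su.
Qed.

Lemma distributive_join_BL : is_join D_ideal incl S j.
Proof.
have [[Bj [ubj _]] _] := distj.
split; first exact: BD; split=> // E DE ubE y jy.
case: DE => _ join_closed; apply: (join_closed (below_in S y)).
  by move=> v [_ [s Ss sv]]; apply: ubE sv.
exact: distributive_join_below_in.
Qed.

End DistributiveJoin.

Hypothesis meetB : meet_closed B.

Lemma kappa_frame_sub_kappa_frame K : kappa_frame B incl K -> sub_kappa_frame K B.
Proof.
move=> [complete JD]; split=> //; split=> // S j SB smallS Jj.
have [j' Jj'] := complete S SB smallS.
have BLj' := distributive_join_BL SB (JD S j' SB smallS Jj').
by rewrite (is_join_unique incl_anti Jj BLj'); case: Jj'.
Qed.

Lemma sub_kappa_frame_kappa_frame K : sub_kappa_frame K B -> kappa_frame B incl K.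
Proof.
case=> _ [_ closedB].
have joinB S : (forall s, S s -> B s) -> small K S -> B (bljoin S) /\ is_join B incl S (bljoin S).
  move=> SB smallS; have BJ : B (bljoin S) := closedB S _ SB smallS (is_join_bljoin S).
  by split=> //; apply: is_join_sub BD BJ (is_join_bljoin S).
split=> [S SB smallS | S j SB smallS Jj]; first by exists (bljoin S); case: (joinB S SB smallS).
have [BJ JB] := joinB S SB smallS.
rewrite (is_join_unique incl_anti Jj JB); split=> // a m Ba meet_m.
have meetBI E F : B E -> B F -> is_meet B incl (pair2 E F) (fun x => E x /\ F x).
  by move=> BE BF; apply: is_meet_setI; apply: meetB.2.
rewrite (is_meet_unique incl_anti meet_m (meetBI _ _ Ba BJ)).
have SD s : S s -> D_ideal s by move=> /SB; apply: BD.
apply: eq_is_join (is_join_sub BD _ (is_join_bljoin_setI SD (BD Ba))) => [t|].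
  split=> [[s Ss ->] | [s [Ss meet_t]]]; exists s => //.
    by split=> //; apply: meetBI (SB _ Ss).
  by rewrite (is_meet_unique incl_anti meet_t (meetBI _ _ Ba (SB _ Ss))).
exact: meetB.2.
Qed.

End Embedding.

End DIdeals.

Theorem theorem3p7 (K : Type) (hK : regular_cardinal K)
  (d : Order.disp_t) (A : tMeetSemilatticeType d)
  (B : (A -> Prop) -> Prop)
  (hAB : forall a : A, B (down a))
  (hBBL : forall E, B E -> D_ideal E)
  (hBmeet : meet_closed B) :
  (kappa_frame B (@incl d A) K <-> sub_kappa_frame K B) /\
  (sub_kappa_frame K B <-> generated_sub_kappa_frame K B = B).
Proof.
split; split.
- exact: kappa_frame_sub_kappa_frame.
- exact: sub_kappa_frame_kappa_frame.
- exact: generated_sub_kappa_frame_id.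
- by move=> genB; rewrite -genB; apply: sub_kappa_frame_generated.
Qed.
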